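(* A finitely generated group $G$ admits a transitive translation-like action by $\mathbb{Z}$ if and only if $G$ has a Cayley graph admitting a bi-infinite Hamiltonian path.
   Context: A finitely generated group $G$ is given the word metric $d_S(g,h)=\min\{n : g^{-1}h\in (S\cup S^{-1})^n\}$ for a finite generating set $S$; all such metrics are bilipschitz equivalent, so the notion below does not depend on $S$. For a group $H$ and a metric space $(X,d)$, a right action $*$ of $H$ on $X$ is translation-like if it is free ($x*h=x$ implies $h=1_H$) and for every $h\in H$ the set $\{d(x,x*h): x\in X\}$ is bounded. A Cayley graph of $G$ means $\mathrm{Cay}(G;S)$ for a finite generating set $S$: vertex set $G$, with $g$ adjacent to $gs$ for $s\in S\cup S^{-1}$. A bi-infinite Hamiltonian path is a bijection $P:\mathbb{Z}\to V$ onto the vertex set with $P(i)$ adjacent to $P(i+1)$ for all $i$. *)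

From Stdlib Require Import ZArith List.
Import ListNotations.
Set Implicit Arguments.

Definition is_group (G : Type) (mul : G -> G -> G) (e : G) (inv : G -> G) : Prop :=
  (forall x y z, mul x (mul y z) = mul (mul x y) z) /\
  (forall x, mul e x = x) /\ (forall x, mul x e = x) /\
  (forall x, mul (inv x) x = e) /\ (forall x, mul x (inv x) = e).

Section Group.
Variables (G : Type) (mul : G -> G -> G) (e : G) (inv : G -> G).

Definition word_prod (w : list G) : G := fold_right mul e w.

Definition letter (S : list G) (a : G) : Prop := In a S \/ exists s, In s S /\ a = inv s.

Definition in_ball_power (S : list G) (n : nat) (x : G) : Prop :=
  exists w : list G, length w = n /\ Forall (letter S) w /\ word_prod w = x.

Definition generates (S : list G) : Prop := forall g, exists n, in_ball_power S n g.

Definition finitely_generated : Prop := exists S, generates S.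

(* d_S(g,h) <= N, where d_S(g,h) = min { n | g^{-1} h ∈ (S ∪ S^{-1})^n } *)
Definition word_dist_le (S : list G) (g h : G) (N : nat) : Prop :=
  exists n, n <= N /\ in_ball_power S n (mul (inv g) h).

Definition right_Z_action (act : G -> Z -> G) : Prop :=
  (forall x, act x 0%Z = x) /\ (forall x m n, act (act x m) n = act x (m + n)%Z).

Definition free_action (act : G -> Z -> G) : Prop :=
  forall x h, act x h = x -> h = 0%Z.

Definition transitive_action (act : G -> Z -> G) : Prop :=
  forall x y, exists h, act x h = y.

Definition translation_like (S : list G) (act : G -> Z -> G) : Prop :=
  right_Z_action act /\ free_action act /\
  forall h, exists N, forall x, word_dist_le S x (act x h) N.

Definition cayley_adj (S : list G) (g h : G) : Prop :=
  exists s, In s S /\ (h = mul g s \/ h = mul g (inv s)).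

Definition bi_infinite_hamiltonian_path (S : list G) (P : Z -> G) : Prop :=
  (forall i j, P i = P j -> i = j) /\ (forall g, exists i, P i = g) /\
  (forall i, cayley_adj S (P i) (P (i + 1)%Z)).

End Group.

(** A transitive translation-like action of Z is the same thing as a bijection
    [P : Z -> G], namely the orbit map [i |-> 1 * i], whose consecutive steps
    [P i ^-1 * P (i + 1)] have bounded word length.  Bounded steps are
    precisely what is needed for [P] to be a path in a Cayley graph once the
    generating set is enlarged by the (finite) ball of that radius; conversely,
    steps along a Cayley-graph path have bounded length for any generating set,
    so translating along the path by [h] moves every point by at most a
    constant multiple of [|h|]. *)

From Stdlib Require Import ZArith List Lia ClassicalEpsilon.
Import ListNotations.
Set Implicit Arguments.

Section Orbits.
Variables (G : Type) (act : G -> Z -> G).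
Hypotheses (Hact : right_Z_action act) (Hfree : free_action act).

Lemma orbit_injective x : forall i j, act x i = act x j -> i = j.
Proof.
  intros i j Hij.
  assert (Hji : act (act x i) (j - i)%Z = act x i).
  { destruct Hact as [_ Hcomp]. rewrite Hcomp, Hij. f_equal. lia. }
  apply Hfree in Hji. lia.
Qed.

End Orbits.

Section PathShift.
Variables (G : Type) (P : Z -> G) (index : G -> Z).
Hypotheses (HPinj : forall i j, P i = P j -> i = j)
           (HPindex : forall g, P (index g) = g).

Lemma index_P k : index (P k) = k.
Proof. apply HPinj, HPindex. Qed.

Definition path_shift (x : G) (n : Z) : G := P (index x + n).

Lemma path_shift_action : right_Z_action path_shift.
Proof.
  unfold path_shift; split.
  - intro x. now rewrite Z.add_0_r.
  - intros x m n. now rewrite index_P, Z.add_assoc.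
Qed.

Lemma path_shift_free : free_action path_shift.
Proof.
  intros x h Hx. unfold path_shift in Hx. rewrite <- (HPindex x) in Hx at 2.
  apply HPinj in Hx. lia.
Qed.

Lemma path_shift_transitive : transitive_action path_shift.
Proof.
  intros x y. exists (index y - index x)%Z. unfold path_shift.
  rewrite <- HPindex. f_equal. lia.
Qed.

End PathShift.

Section WordMetric.
Variables (G : Type) (mul : G -> G -> G) (e : G) (inv : G -> G).
Hypothesis Hgrp : is_group mul e inv.

Lemma mulA x y z : mul x (mul y z) = mul (mul x y) z.
Proof. apply Hgrp. Qed.

Lemma mul1g x : mul e x = x.
Proof. apply Hgrp. Qed.

Lemma mulg1 x : mul x e = x.
Proof. apply Hgrp. Qed.

Lemma mulVg x : mul (inv x) x = e.
Proof. apply Hgrp. Qed.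

Lemma mulgV x : mul x (inv x) = e.
Proof. apply Hgrp. Qed.

Lemma mulKg x y : mul x (mul (inv x) y) = y.
Proof. now rewrite mulA, mulgV, mul1g. Qed.

Lemma invg_unique a b : mul a b = e -> b = inv a.
Proof.
  intro Hab. now rewrite <- (mul1g b), <- (mulVg a), <- mulA, Hab, mulg1.
Qed.

Lemma invgK a : inv (inv a) = a.
Proof. symmetry. apply invg_unique, mulVg. Qed.

Lemma invgM a b : inv (mul a b) = mul (inv b) (inv a).
Proof.
  symmetry. apply invg_unique.
  now rewrite <- mulA, (mulA b), mulgV, mul1g, mulgV.
Qed.

Lemma invg1 : inv e = e.
Proof. now rewrite <- (mulg1 (inv e)), mulVg. Qed.

Lemma mul_chain a b c : mul (mul (inv a) b) (mul (inv b) c) = mul (inv a) c.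
Proof. now rewrite <- mulA, mulKg. Qed.

Lemma word_prod_app w1 w2 :
  word_prod mul e (w1 ++ w2) = mul (word_prod mul e w1) (word_prod mul e w2).
Proof.
  induction w1 as [|a w1 IH]; simpl.
  - now rewrite mul1g.
  - now rewrite IH, mulA.
Qed.

Lemma word_prod_rev_inv w :
  word_prod mul e (rev (map inv w)) = inv (word_prod mul e w).
Proof.
  induction w as [|a w IH]; simpl.
  - now rewrite invg1.
  - now rewrite word_prod_app, IH, invgM; simpl; rewrite mulg1.
Qed.

(** [word_dist_le S x y N] unfolds to [norm_le S (mul (inv x) y) N]. *)
Definition norm_le (S : list G) (g : G) (N : nat) : Prop :=
  exists n, n <= N /\ in_ball_power mul e inv S n g.

Lemma norm_le_mono S g N M : N <= M -> norm_le S g N -> norm_le S g M.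
Proof. intros HNM (n & Hn & Hg). exists n; split; [lia | exact Hg]. Qed.

Lemma norm_le_e S : norm_le S e 0.
Proof. exists 0; split; [lia |]. now exists []. Qed.

Lemma norm_le_mul S a b N M :
  norm_le S a N -> norm_le S b M -> norm_le S (mul a b) (N + M).
Proof.
  intros (n & Hn & w & Hw & Hwl & <-) (m & Hm & v & Hv & Hvl & <-).
  exists (n + m); split; [lia |].
  exists (w ++ v); repeat split.
  - rewrite length_app; lia.
  - now apply Forall_app.
  - apply word_prod_app.
Qed.

Lemma letter_inv S a : letter inv S a -> letter inv S (inv a).
Proof.
  intros [Ha | (s & Hs & ->)].
  - right; now exists a.
  - left; now rewrite invgK.
Qed.

Lemma norm_le_inv S a N : norm_le S a N -> norm_le S (inv a) N.
Proof.
  intros (n & Hn & w & Hw & Hwl & <-). exists n; split; [exact Hn |].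
  exists (rev (map inv w)); repeat split.
  - now rewrite length_rev, length_map.
  - apply Forall_rev, Forall_map. exact (Forall_impl _ (@letter_inv S) Hwl).
  - apply word_prod_rev_inv.
Qed.

Lemma norm_le_list S0 (HS0 : generates mul e inv S0) (S : list G) :
  exists M, forall s, In s S -> norm_le S0 s M.
Proof.
  induction S as [|a S (M & HM)].
  - exists 0; intros s [].
  - destruct (HS0 a) as (n & Hn).
    exists (max n M); intros s [<- | Hs].
    + exists n; split; [lia | exact Hn].
    + apply (norm_le_mono (Nat.le_max_r n M)), HM, Hs.
Qed.

Lemma norm_le_cayley_step S0 S M x y :
  (forall s, In s S -> norm_le S0 s M) ->
  cayley_adj mul inv S x y -> norm_le S0 (mul (inv x) y) M.
Proof.
  intros HM (s & Hs & [-> | ->]); rewrite mulA, mulVg, mul1g.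
  - now apply HM.
  - now apply norm_le_inv, HM.
Qed.

Lemma cayley_adj_of_step S x y : In (mul (inv x) y) S -> cayley_adj mul inv S x y.
Proof. intro Hs. exists (mul (inv x) y); split; [exact Hs | left; now rewrite mulKg]. Qed.

Lemma generates_app_l S T : generates mul e inv S -> generates mul e inv (S ++ T).
Proof.
  intros HS g. destruct (HS g) as (n & w & Hw & Hwl & Hg).
  exists n, w; repeat split; try assumption.
  refine (Forall_impl _ _ Hwl).
  intros a [Ha | (s & Hs & ->)]; [left | right; exists s; split];
    auto using in_or_app.
Qed.

Lemma norm_le_path_nat S0 M (f : Z -> G) :
  (forall i, norm_le S0 (mul (inv (f i)) (f (i + 1)%Z)) M) ->
  forall n k, norm_le S0 (mul (inv (f k)) (f (k + Z.of_nat n)%Z)) (M * n).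
Proof.
  intros Hstep n k. induction n as [|n IH].
  - rewrite Z.add_0_r, mulVg, Nat.mul_0_r. apply norm_le_e.
  - replace (k + Z.of_nat (S n))%Z with (k + Z.of_nat n + 1)%Z by lia.
    replace (M * S n) with (M * n + M) by lia.
    rewrite <- (mul_chain (f k) (f (k + Z.of_nat n)%Z)).
    now apply norm_le_mul.
Qed.

Lemma norm_le_path S0 M (f : Z -> G) :
  (forall i, norm_le S0 (mul (inv (f i)) (f (i + 1)%Z)) M) ->
  forall k h, norm_le S0 (mul (inv (f k)) (f (k + h)%Z)) (M * Z.abs_nat h).
Proof.
  intros Hstep k h. destruct (Z_le_gt_dec 0 h) as [Hh | Hh].
  - pose proof (@norm_le_path_nat S0 M f Hstep (Z.abs_nat h) k) as Hk.
    now rewrite Zabs2Nat.id_abs, Z.abs_eq in Hk by lia.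
  - pose proof (@norm_le_path_nat S0 M f Hstep (Z.abs_nat h) (k + h)) as Hk.
    replace (k + h + Z.of_nat (Z.abs_nat h))%Z with k in Hk by lia.
    apply norm_le_inv in Hk. now rewrite invgM, invgK in Hk.
Qed.

Fixpoint words (A : list G) (n : nat) : list (list G) :=
  match n with
  | 0 => [[]]
  | S n => flat_map (fun a => map (cons a) (words A n)) A
  end.

Lemma in_words A w : Forall (fun a => In a A) w -> In w (words A (length w)).
Proof.
  induction 1 as [|a w Ha _ IH]; simpl; [now left |].
  apply in_flat_map. exists a; split; [exact Ha | now apply in_map].
Qed.

Definition ball (A : list G) (N : nat) : list G :=
  flat_map (fun n => map (word_prod mul e) (words (A ++ map inv A) n)) (seq 0 (N + 1)).

Lemma in_ball S g N : norm_le S g N -> In g (ball S N).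
Proof.
  intros (n & Hn & w & <- & Hwl & <-). apply in_flat_map.
  exists (length w); split; [apply in_seq; lia |].
  apply in_map, in_words. refine (Forall_impl _ _ Hwl).
  intros a [Ha | (s & Hs & ->)]; apply in_or_app; [left | right]; auto using in_map.
Qed.

End WordMetric.

Lemma translation_like_to_hamiltonian_path (G : Type) (mul : G -> G -> G)
  (e : G) (inv : G -> G) (Hgrp : is_group mul e inv) (S0 : list G)
  (HS0 : generates mul e inv S0) (act : G -> Z -> G) :
  translation_like mul e inv S0 act -> transitive_action act ->
  exists S, generates mul e inv S /\
    exists P, bi_infinite_hamiltonian_path mul inv S P.
Proof.
  intros (Hact & Hfree & Hbounded) Htr.
  destruct (Hbounded 1%Z) as (N & HN).
  exists (S0 ++ ball mul e inv S0 N).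
  split; [now apply generates_app_l |].
  exists (act e); repeat split.
  - exact (orbit_injective Hact Hfree e).
  - intro g. destruct (Htr e g) as (i & Hi). now exists i.
  - intro i. apply (cayley_adj_of_step Hgrp), in_or_app; right.
    apply in_ball. destruct Hact as [_ Hcomp].
    rewrite <- Hcomp. apply HN.
Qed.

Lemma hamiltonian_path_to_translation_like (G : Type) (mul : G -> G -> G)
  (e : G) (inv : G -> G) (Hgrp : is_group mul e inv) (S0 : list G)
  (HS0 : generates mul e inv S0) (S : list G) (P : Z -> G) :
  bi_infinite_hamiltonian_path mul inv S P ->
  exists act, translation_like mul e inv S0 act /\ transitive_action act.
Proof.
  intros (HPinj & HPsurj & Hadj).
  destruct (choice _ HPsurj) as (index & HPindex).
  destruct (norm_le_list HS0 S) as (M & HM).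
  exists (path_shift P index).
  split; [| exact (path_shift_transitive P index HPindex)].
  split; [exact (path_shift_action P index HPinj HPindex) |].
  split; [exact (path_shift_free P index HPinj HPindex) |].
  assert (Hstep : forall i, norm_le mul e inv S0 (mul (inv (P i)) (P (i + 1)%Z)) M)
    by (intro i; exact (norm_le_cayley_step Hgrp HM (Hadj i))).
  intro h. exists (M * Z.abs_nat h). intro x.
  pose proof (norm_le_path Hgrp P Hstep (index x) h) as Hx.
  now rewrite HPindex in Hx.
Qed.

Theorem corollary3p2 (G : Type) (mul : G -> G -> G) (e : G) (inv : G -> G)
  (Hgrp : is_group mul e inv) (S0 : list G) (HS0 : generates mul e inv S0) :
  (exists act : G -> Z -> G,
      translation_like mul e inv S0 act /\ transitive_action act) <->
  (exists S : list G, generates mul e inv S /\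
      exists P : Z -> G, bi_infinite_hamiltonian_path mul inv S P).
Proof.
  split.
  - intros (act & Htl & Htr).
    exact (translation_like_to_hamiltonian_path Hgrp HS0 Htl Htr).
  - intros (S & _ & P & Hpath).
    exact (hamiltonian_path_to_translation_like Hgrp HS0 Hpath).
Qed.
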